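(* Let $\Pi$ be an $\mathrm{LP}^{\mathrm{MLN}}$ program such that $\mathrm{SM}'[\Pi]$ is not empty. Then for every interpretation $I$, $P'_\Pi(I) = P_\Pi(I)$.
   Context: Fix a first-order signature $\sigma$ with no function constants of positive arity; Herbrand interpretations are identified with sets of ground atoms. A formula is negative if every occurrence of every atom is in the scope of negation. A rule has the form $A\leftarrow B\wedge N$ ($A$ a possibly empty disjunction of atoms, $B$ a conjunction of atoms, $N$ a negative formula), identified with $B\wedge N\rightarrow A$. For a ground program (finite set of rules) $\Pi$, the reduct $\Pi^I$ consists of $A\leftarrow B$ for all rules $A\leftarrow B\wedge N$ in $\Pi$ with $I\models N$; $I$ is a (deterministic) stable model of $\Pi$ if $I$ is a minimal Herbrand model of $\Pi^I$. An $\mathrm{LP}^{\mathrm{MLN}}$ program $\Pi$ is a finite set of weighted rules $w:R$, where $R$ is a rule and $w$ is a real number (soft rule) or the symbol $\alpha$ (hard rule); it is identified with its ground instance, each ground rule inheriting the weight of the rule it comes from. $\overline{\Pi}=\{R \mid w:R\in\Pi\}$; $\Pi_I$ is the set of $w:R\in\Pi$ with $I\models R$; $\Pi^{\rm hard}$ and $\Pi^{\rm soft}$ are the sets of hard and soft rules. $\mathrm{SM}[\Pi]=\{I\mid I \text{ is a stable model of } \overline{\Pi_I}\}$. With $\alpha$ treated as a real parameter, $W_\Pi(I)=\exp(\sum_{w:R\in\Pi_I} w)$ if $I\in\mathrm{SM}[\Pi]$ and $0$ otherwise, and $P_\Pi(I)=\lim_{\alpha\to\infty} W_\Pi(I)/\sum_{J\in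 \mathrm{SM}[\Pi]}W_\Pi(J)$. Further, $\mathrm{SM}'[\Pi]$ is the set of interpretations $I$ that are stable models of $\overline{\Pi_I}$ and satisfy $\overline{\Pi^{\rm hard}}$; $W'_\Pi(I)=\exp(\sum_{w:R\in(\Pi^{\rm soft})_I} w)$ if $I\in \mathrm{SM}'[\Pi]$ and $0$ otherwise; $P'_\Pi(I)=W'_\Pi(I)/\sum_{J\in\mathrm{SM}'[\Pi]}W'_\Pi(J)$. *)

From HB Require Import structures.
From mathcomp Require Import all_boot all_order all_algebra.
From mathcomp Require Import all_classical all_reals all_analysis.
Set Implicit Arguments. Unset Strict Implicit. Unset Printing Implicit Defensive.
Import Order.TTheory GRing.Theory Num.Theory.
Local Open Scope ring_scope.

Section LPMLN.
Variable T : finType.   (* ground atoms (finite Herbrand base) *)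

Inductive formula :=
| FAtom of T | FBot | FNot of formula
| FAnd of formula & formula | FOr of formula & formula | FImp of formula & formula.

Fixpoint fsat (I : {set T}) (f : formula) : bool :=
  match f with
  | FAtom a => a \in I
  | FBot => false
  | FNot g => ~~ fsat I g
  | FAnd g h => fsat I g && fsat I h
  | FOr g h => fsat I g || fsat I h
  | FImp g h => fsat I g ==> fsat I h
  end.

(* every occurrence of every atom is in the scope of negation *)
Fixpoint negative (f : formula) : bool :=
  match f with
  | FAtom _ => false
  | FBot => true
  | FNot _ => true
  | FAnd g h | FOr g h | FImp g h => negative g && negative h
  end.

(* a ground rule  A <- B /\ N : head = disjunction of atoms, pbody = conjunction
   of atoms, nbody = negative formula *)
Record rule := Rule {
  head : seq T; pbody : seq T; nbody : formula; nbody_negative : negative nbody }.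

Definition rsat (I : {set T}) (r : rule) : bool :=
  (all (fun a => a \in I) (pbody r) && fsat I (nbody r)) ==> has (fun a => a \in I) (head r).

(* positive rule A <- B as (head, body) *)
Definition psat (I : {set T}) (pr : seq T * seq T) : bool :=
  all (fun a => a \in I) pr.2 ==> has (fun a => a \in I) pr.1.

Definition pmodel (I : {set T}) (P : seq (seq T * seq T)) : bool := all (psat I) P.

Definition reduct (P : seq rule) (I : {set T}) : seq (seq T * seq T) :=
  [seq (head r, pbody r) | r <- P & fsat I (nbody r)].

Definition stable (P : seq rule) (I : {set T}) : bool :=
  pmodel I (reduct P I) &&
  [forall J : {set T}, (J \proper I) ==> ~~ pmodel J (reduct P I)].

Variable R : realType.

Inductive weight := Soft of R | Hard.

Definition is_hard (w : weight) : bool := if w is Hard then true else false.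

(* weight with alpha treated as the real parameter a *)
Definition wval (a : R) (w : weight) : R := if w is Soft r then r else a.
Definition soft_val (w : weight) : R := if w is Soft r then r else 0.

(* an LP^MLN program (its ground instance): finite list of weighted rules *)
Definition program := seq (weight * rule).

Definition Pbar (P : program) : seq rule := [seq wr.2 | wr <- P].
Definition Psat (P : program) (I : {set T}) : program := [seq wr <- P | rsat I wr.2].

Definition SM (P : program) (I : {set T}) : bool := stable (Pbar (Psat P I)) I.

Definition W (P : program) (a : R) (I : {set T}) : R :=
  if SM P I then expR (\sum_(wr <- Psat P I) wval a wr.1) else 0.

(* the ratio whose limit as alpha -> oo defines P_Pi(I) *)
Definition Pratio (P : program) (I : {set T}) (a : R) : R :=
  W P a I / \sum_(J : {set T} | SM P J) W P a J.

Definition SM' (P : program) (I : {set T}) : bool :=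
  SM P I && all (fun wr => is_hard wr.1 ==> rsat I wr.2) P.

Definition W' (P : program) (I : {set T}) : R :=
  if SM' P I then expR (\sum_(wr <- Psat P I | ~~ is_hard wr.1) soft_val wr.1) else 0.

Definition P' (P : program) (I : {set T}) : R :=
  W' P I / \sum_(J : {set T} | SM' P J) W' P J.

End LPMLN.

(* Weighting every rule by alpha turns W_Pi(J) into exp(alpha * h) * g_J(alpha), where h is
   the number of hard rules and g_J(alpha) = exp(soft weight of J) * exp(-alpha)^(h - h_J),
   h_J being the number of hard rules J satisfies.  The common factor exp(alpha * h) cancels
   in P_Pi, and g_J tends to W'_Pi(J), since the exponent h - h_J vanishes exactly when J
   satisfies all hard rules.  As SM'[Pi] is non-empty, the limit of the denominator is
   positive, so the limit of the ratio is the ratio of the limits, which is P'_Pi. *)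
From HB Require Import structures.
From mathcomp Require Import all_boot all_order all_algebra.
From mathcomp Require Import all_classical all_reals all_analysis.
From mathcomp Require Import lra.
Import numFieldNormedType.Exports.
Import Order.TTheory GRing.Theory Num.Theory.
Local Open Scope ring_scope.
Local Open Scope classical_set_scope.

Lemma count_filter_le (X : Type) (a b : pred X) (s : seq X) :
  (count a [seq x <- s | b x] <= count a s)%N.
Proof. by rewrite count_filter; apply: sub_count => x /andP[]. Qed.

Lemma count_filter_eq (X : Type) (a b : pred X) (s : seq X) :
  (count a [seq x <- s | b x] == count a s) = all (fun x => a x ==> b x) s.
Proof.
elim: s => //= x s IHs.
case: (b x) => /=; case: (a x); rewrite /= ?add1n ?add0n ?eqSS //.
by rewrite ltn_eqF // ltnS count_filter_le.
Qed.

Lemma cvg_ratio_sum {R : numFieldType} {U : Type} (F : set_system U) {FF : Filter F}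
    (I : finType) (f : I -> U -> R) (l : I -> R) (i : I) :
  (forall j, f j x @[x --> F] --> l j) -> \sum_j l j != 0 ->
  f i x / \sum_j f j x @[x --> F] --> l i / \sum_j l j.
Proof.
move=> f_cvg suml_neq0; apply: cvgM; first exact: f_cvg.
apply: cvgV => //; apply: cvg_big; first exact: add_continuous.
by move=> j _; exact: f_cvg.
Qed.

Section LPMLN.
Variables (T : finType) (R : realType).
Implicit Types (P Q : program T R) (I J : {set T}) (a : R).

Definition nhard Q : nat := count (fun wr => is_hard wr.1) Q.

Definition soft_sum Q : R := \sum_(wr <- Q | ~~ is_hard wr.1) soft_val wr.1.

Lemma nhard_Psat_le P J : (nhard (Psat P J) <= nhard P)%N.
Proof. exact: count_filter_le. Qed.

Lemma nhard_Psat_eq P J :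
  (nhard (Psat P J) == nhard P) = all (fun wr => is_hard wr.1 ==> rsat J wr.2) P.
Proof. exact: count_filter_eq. Qed.

Lemma sum_wval Q a : \sum_(wr <- Q) wval a wr.1 = (nhard Q)%:R * a + soft_sum Q.
Proof.
rewrite (bigID (fun wr => is_hard wr.1)) /=; congr (_ + _); last first.
  by apply: eq_bigr => -[[]].
rewrite (eq_bigr (fun _ => a)); last by move=> -[[]].
by rewrite big_const_seq iter_addr_0 mulr_natl.
Qed.

Definition scaled_weight P J a : R :=
  if SM P J then expR (soft_sum (Psat P J)) * expR (- a) ^+ (nhard P - nhard (Psat P J))
  else 0.

Lemma W_scaled P a J : W P a J = expR ((nhard P)%:R * a) * scaled_weight P J a.
Proof.
rewrite /W /scaled_weight; case: (SM P J); last by rewrite mulr0.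
rewrite sum_wval -expRM_natl mulrA -!expRD; congr expR.
by rewrite natrB ?nhard_Psat_le //; lra.
Qed.

Lemma scaled_weight_cvg P J : scaled_weight P J a @[a --> +oo] --> W' P J.
Proof.
rewrite /scaled_weight /W' /SM' -/(soft_sum _); case: (SM P J) => /=; last exact: cvg_cst.
set k := (nhard P - nhard (Psat P J))%N.
have -> : all (fun wr => is_hard wr.1 ==> rsat J wr.2) P = (k == 0)%N.
  by rewrite -nhard_Psat_eq subn_eq0 eqn_leq nhard_Psat_le.
have -> : (if k == 0%N then expR (soft_sum (Psat P J)) else 0) =
          expR (soft_sum (Psat P J)) * 0 ^+ k.
  by rewrite expr0n; case: (k == 0)%N; rewrite ?mulr1 ?mulr0.
apply: cvgM; first exact: cvg_cst.
apply: (@continuous_cvg _ _ _ _ _ (fun a => expR (- a)) (fun x => x ^+ k)).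
  exact: exprn_continuous.
exact: cvgr_expR.
Qed.

Lemma Pratio_scaled P I a :
  Pratio P I a = scaled_weight P I a / \sum_J scaled_weight P J a.
Proof.
rewrite /Pratio big_mkcond (eq_bigr (W P a)) => [|J _]; last first.
  by rewrite /W; case: (SM P J).
rewrite W_scaled; under eq_bigr do rewrite W_scaled.
by rewrite -mulr_sumr -mulf_div divff ?mul1r // expR_eq0.
Qed.

Lemma P'_sum P I : P' P I = W' P I / \sum_J W' P J.
Proof.
rewrite /P' big_mkcond; congr (_ / _); apply: eq_bigr => J _.
by rewrite /W'; case: (SM' P J).
Qed.

Lemma W'_ge0 P J : 0 <= W' P J.
Proof. by rewrite /W'; case: (SM' P J) => //; exact: expR_ge0. Qed.

Lemma W'_gt0 P J : SM' P J -> 0 < W' P J.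
Proof. by rewrite /W' => ->; exact: expR_gt0. Qed.

End LPMLN.

Theorem proposition2 (T : finType) (R : realType) (P : program T R) :
  (exists I : {set T}, SM' P I) ->
  forall I : {set T}, Pratio P I a @[a --> +oo] --> P' P I.
Proof.
move=> [I0 SM'I0] I.
have sumW'_neq0 : \sum_J W' P J != 0.
  rewrite psumr_neq0 => [|J _]; last exact: W'_ge0.
  by apply/hasP; exists I0; rewrite ?mem_index_enum ?W'_gt0.
rewrite P'_sum; under eq_cvg do rewrite Pratio_scaled.
exact: (cvg_ratio_sum _ _ _ _ I (scaled_weight_cvg _ _ P) sumW'_neq0).
Qed.
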